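(* Let $G=(V,E)$ be a finite graph, $f:V\to[0,r]$, and $C$ any vertex cover of (the underlying undirected graph of) $B_{0,f}$. Define $g_C(u)=f(u)$ for $u\in V\setminus C$ and $g_C(u)=\max\bigl(0,\max_{v\in V\setminus C}(f(v)-\mathrm{dist}_G(u,v))\bigr)$ for $u\in C$, where a maximum over an empty set is $0$. Then $g_C$ is Lipschitz.
   Context: $\mathrm{dist}_G$ is the shortest-path distance (taken to be $+\infty$ between different connected components, with $f(v)-\infty=-\infty$). $g$ is Lipschitz if $|g(x)-g(y)|\le\mathrm{dist}_G(x,y)$ for all $x,y$. $VS_f(x,y)=|f(x)-f(y)|-\mathrm{dist}_G(x,y)$ if positive, else $0$; $B_{0,f}$ is the directed graph on $V$ with edges $\{(x,y):VS_f(x,y)>0,\ f(x)<f(y)\}$. *)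

From HB Require Import structures.
From mathcomp Require Import all_boot all_order all_algebra.
Set Implicit Arguments. Unset Strict Implicit. Unset Printing Implicit Defensive.
Import Order.TTheory GRing.Theory Num.Theory.
Local Open Scope ring_scope.

Section Defs.
Variable V : finType.
Variable e : rel V.

Definition walkn (n : nat) (x y : V) : bool :=
  [exists p : n.-tuple V, path e x p && (last x p == y)].

(* shortest-path distance; None encodes +oo (different components).
   A shortest walk, if any, has length < #|V|. *)
Definition gdist (x y : V) : option nat :=
  let k := find (fun n => walkn n x y) (iota 0 #|V|) in
  if (k < #|V|)%N then Some k else None.

Variable R : realFieldType.

Definition lipschitz (g : V -> R) : Prop :=
  forall x y, match gdist x y with
              | Some d => (`|g x - g y| <= d%:R) : Prop
              | None => True
              end.

(* VS_f(x,y) > 0, i.e. |f x - f y| - dist(x,y) > 0 (false if dist = +oo) *)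
Definition VS_pos (f : V -> R) (x y : V) : bool :=
  match gdist x y with
  | Some d => d%:R < `|f x - f y|
  | None => false
  end.

Definition B0 (f : V -> R) (x y : V) : bool := VS_pos f x y && (f x < f y).

Definition vertex_cover_B0 (f : V -> R) (C : {set V}) : Prop :=
  forall x y, B0 f x y -> (x \in C) || (y \in C).

(* g_C; for u in C: max(0, max_{v notin C} (f v - dist(u,v))), terms with
   dist = +oo are -oo and are replaced by 0, which does not change the max. *)
Definition gC (f : V -> R) (C : {set V}) (u : V) : R :=
  if u \in C then
    \big[Num.max/0]_(v | v \notin C)
      match gdist u v with Some d => f v - d%:R | None => 0 end
  else f u.
End Defs.

From mathcomp Require Import all_boot all_order all_algebra.
From mathcomp Require Import lra.
Import Order.TTheory GRing.Theory Num.Theory.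
Set Implicit Arguments. Unset Strict Implicit. Unset Printing Implicit Defensive.

(* Write d(u,v) for the graph distance.  Because C covers every
   edge of B_{0,f}, the function f is already Lipschitz on V \ C: a pair
   u, w outside C with |f u - f w| > d(u,w) would be an edge of B_{0,f}
   with no endpoint in C.  Consequently g_C dominates every "cone"
   v |-> f v - d(y,v) with apex v outside C: for y in C by the definition of
   g_C as a maximum, for y outside C by the Lipschitz property of f.
   The one-sided estimate g_C x <= g_C y + d(x,y) follows: if x is in C,
   each cone term f v - d(x,v) is at most f v - d(y,v) + d(x,y) by the
   triangle inequality; if x is not in C, g_C x = f x is itself the cone
   term with apex x.  Symmetry of d turns the one-sided estimate into the
   Lipschitz property. *)

Local Open Scope ring_scope.

Section GraphDistance.
Variable V : finType.
Variable e : rel V.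
Hypothesis e_sym : symmetric e.

Lemma walknP n x y :
  reflect (exists p : seq V, [/\ size p = n, path e x p & last x p = y])
          (walkn e n x y).
Proof.
apply: (iffP existsP) => [[p /andP[p_path /eqP p_last]]|[p [p_size p_path p_last]]].
  by exists (val p); rewrite size_tuple.
have p_sizeb : size p == n by rewrite p_size.
by exists (Tuple p_sizeb); rewrite /= p_path p_last eqxx.
Qed.

Lemma walkn_cat a b x y z :
  walkn e a x y -> walkn e b y z -> walkn e (a + b) x z.
Proof.
move=> /walknP[p [<- p_path p_last]] /walknP[q [<- q_path q_last]].
apply/walknP; exists (p ++ q).
by rewrite size_cat cat_path last_cat p_last p_path q_path.
Qed.

Lemma walkn_sym n x y : walkn e n x y -> walkn e n y x.
Proof.
move=> /walknP[p [p_size p_path p_last]]; apply/walknP.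
exists (rev (belast x p)); split; first by rewrite size_rev size_belast.
  by rewrite -p_last rev_path; apply: sub_path p_path => u v; rewrite e_sym.
by rewrite -p_last; case: p {p_size p_path p_last} => [|z q] //=; rewrite rev_cons last_rcons.
Qed.

(* Removing cycles yields a walk shorter than #|V|. *)
Lemma walkn_short n x y : walkn e n x y -> exists2 m, (m < #|V|)%N & walkn e m x y.
Proof.
move=> /walknP[p [_ p_path p_last]].
case: (shortenP p_path) p_last => q q_path q_uniq _ q_last.
exists (size q); last by apply/walknP; exists q.
by have := max_card (mem (x :: q)); rewrite (card_uniqP q_uniq).
Qed.

Lemma gdist_walkn x y k : gdist e x y = Some k -> walkn e k x y.
Proof.
rewrite /gdist; case: ifP => // k_lt [<-].
have has_walk : has (fun n => walkn e n x y) (iota 0 #|V|).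
  by rewrite has_find size_iota.
by have := nth_find 0 has_walk; rewrite nth_iota.
Qed.

Lemma walkn_gdist n x y :
  walkn e n x y -> exists2 k, gdist e x y = Some k & (k <= n)%N.
Proof.
move=> walk_n; rewrite /gdist; set P := fun n => walkn e n x y.
have [m m_lt walk_m] := walkn_short walk_n.
have has_walk : has P (iota 0 #|V|) by apply/hasP; exists m; rewrite ?mem_iota.
have find_lt := has_walk; rewrite has_find size_iota in find_lt.
rewrite find_lt; exists (find P (iota 0 #|V|)) => //.
rewrite leqNgt; apply/negP => n_lt.
have := before_find 0 n_lt; rewrite nth_iota ?add0n; first by rewrite /P walk_n.
exact: ltn_trans n_lt find_lt.
Qed.

Lemma gdist_sym x y : gdist e x y = gdist e y x.
Proof.
rewrite /gdist (@eq_find _ _ (fun n => walkn e n y x)) //.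
by move=> n; apply/idP/idP; apply: walkn_sym.
Qed.

Lemma gdist_triangle x y z a b :
  gdist e x y = Some a -> gdist e y z = Some b ->
  exists2 c, gdist e x z = Some c & (c <= a + b)%N.
Proof.
by move=> /gdist_walkn walk_xy /gdist_walkn walk_yz; apply: walkn_gdist (walkn_cat walk_xy walk_yz).
Qed.

Lemma lipschitz_of_le (R : realFieldType) (g : V -> R) :
  (forall x y d, gdist e x y = Some d -> g x <= g y + d%:R) -> lipschitz e g.
Proof.
move=> g_le x y; case d_xy: (gdist e x y) => [d|] //.
have le_xy := g_le _ _ _ d_xy.
have le_yx : g y <= g x + d%:R by apply: g_le; rewrite gdist_sym.
by apply/ler_normlP; split; lra.
Qed.

End GraphDistance.

Section ExtensionFromCover.
Variable V : finType.
Variable e : rel V.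
Hypothesis e_sym : symmetric e.
Variable R : realFieldType.
Variable f : V -> R.
Hypothesis f_ge0 : forall v, 0 <= f v.
Variable C : {set V}.
Hypothesis C_cover : vertex_cover_B0 e f C.

(* Outside the vertex cover, f is already Lipschitz: a violating pair would
   be an uncovered edge of B_{0,f}. *)
Lemma lipschitz_off_cover u w d :
  u \notin C -> w \notin C -> gdist e u w = Some d -> `|f u - f w| <= d%:R.
Proof.
move=> uNC wNC d_uw; rewrite leNgt; apply/negP => violated.
have uncovered x y : B0 e f x y -> x \notin C -> y \notin C -> False.
  by move=> /C_cover; case: (x \in C) (y \in C) => [] [].
case: (ltgtP (f u) (f w)) => f_uw.
- by apply: (uncovered u w); rewrite // /B0 /VS_pos d_uw violated f_uw.
- by apply: (uncovered w u); rewrite // /B0 /VS_pos gdist_sym // d_uw distrC violated f_uw.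
- by move: violated; rewrite f_uw subrr normr0 ltNge ler0n.
Qed.

Lemma gC_ge0 u : 0 <= gC e f C u.
Proof.
rewrite /gC; case: ifP => // _.
by elim/big_rec: _ => // v m _ m_ge0; rewrite le_max m_ge0 orbT.
Qed.

Lemma gC_ge_cone y v c :
  v \notin C -> gdist e y v = Some c -> f v - c%:R <= gC e f C y.
Proof.
move=> vNC c_yv; rewrite /gC; case: ifPn => yC.
  by rewrite (bigD1 v) //= c_yv le_max lexx.
have c_vy : gdist e v y = Some c by rewrite gdist_sym.
by have /ler_normlP[_ ] := lipschitz_off_cover vNC yC c_vy; lra.
Qed.

Lemma gC_le x y d : gdist e x y = Some d -> gC e f C x <= gC e f C y + d%:R.
Proof.
move=> d_xy; have d_yx : gdist e y x = Some d by rewrite gdist_sym.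
have bound_ge0 : 0 <= gC e f C y + d%:R by rewrite addr_ge0 ?gC_ge0.
rewrite /gC; case: ifPn => xC; last first.
  by have := gC_ge_cone xC d_yx; rewrite /gC; lra.
apply: (big_ind (fun z => z <= _)) => // [a b a_le b_le|v vNC].
  by rewrite ge_max a_le b_le.
case a_xv: (gdist e x v) => [a|] //.
have [c c_yv c_le] := gdist_triangle d_yx a_xv.
have c_leR : (c%:R : R) <= d%:R + a%:R by rewrite -natrD ler_nat.
by have := gC_ge_cone vNC c_yv; rewrite /gC; lra.
Qed.

End ExtensionFromCover.

Theorem claim3p2 (V : finType) (e : rel V) (He_sym : symmetric e)
  (He_irr : irreflexive e) (R : realFieldType) (r : R) (f : V -> R)
  (Hf : forall v, 0 <= f v <= r) (C : {set V})
  (HC : vertex_cover_B0 e f C) :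
  lipschitz e (gC e f C).
Proof.
have f_ge0 v : 0 <= f v by case/andP: (Hf v).
exact: lipschitz_of_le (gC_le He_sym f_ge0 HC).
Qed.
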